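(* Let $\Sigma$ be a non-empty alphabet. For every pair $(\mathcal{P},\mathcal{N})$ of finite sets of parity automata over $\Sigma$, if there is an ultimately periodic word $w=u\cdot v^\omega\in\Sigma^\omega$ accepted by all automata in $\mathcal{P}$ and rejected by all automata in $\mathcal{N}$, then there is such a word $w=u'\cdot(v')^\omega$ with $u'\in\Sigma^*$, $v'\in\Sigma^+$ and $|u'|+|v'|\le 2^n-1+2^k$, where $n:=\sum_{A\in\mathcal{P}\cup\mathcal{N}}|Q_A|$ and $k:=\sum_{A\in\mathcal{P}\cup\mathcal{N}}|Q_A|^2\cdot n_A$, with $n_A:=|\{\pi_A(q):q\in Q_A\}|$.
   Context: A parity automaton is $A=(Q,\Sigma,I,\delta,\pi)$ with $Q=Q_A$ a finite non-empty set of states, $I\subseteq Q$, $\delta:Q\times\Sigma\to2^Q$, and priority function $\pi=\pi_A:Q\to\mathbb{N}$. A run on $w\in\Sigma^\omega$ is $\rho\in Q^\omega$ with $\rho[0]\in I$ and $\rho[i+1]\in\delta(\rho[i],w[i])$ for all $i$; $w$ is accepted if some run has the maximal priority occurring infinitely often even. An ultimately periodic word is $u\cdot v^\omega$ with $u\in\Sigma^*$, $v\in\Sigma^+$. *)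

From mathcomp Require Import all_boot.
From Stdlib Require List.
Set Implicit Arguments. Unset Strict Implicit. Unset Printing Implicit Defensive.

Record pa (S : finType) := PA {
  pa_Q : finType;
  pa_I : {set pa_Q};
  pa_delta : pa_Q -> S -> {set pa_Q};
  pa_pri : pa_Q -> nat;
  pa_Q_nonempty : 0 < #|pa_Q|
}.

Definition is_run (S : finType) (A : pa S) (w : nat -> S) (rho : nat -> pa_Q A) : Prop :=
  rho 0 \in pa_I A /\ forall i, rho i.+1 \in pa_delta (rho i) (w i).

Definition inf_often (f : nat -> nat) (p : nat) : Prop :=
  forall N, exists i, N <= i /\ f i = p.

Definition accepts (S : finType) (A : pa S) (w : nat -> S) : Prop :=
  exists rho : nat -> pa_Q A, is_run w rho /\
    exists p, inf_often (fun i => pa_pri (rho i)) p /\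
              (forall q, inf_often (fun i => pa_pri (rho i)) q -> q <= p) /\
              ~~ odd p.

(* the ultimately periodic word u . v^omega (x0 is an irrelevant default,
   only used when v is empty) *)
Definition upw (S : finType) (x0 : S) (u v : seq S) (i : nat) : S :=
  if i < size u then nth x0 u i else nth x0 v ((i - size u) %% size v).

Definition nstates (S : finType) (A : pa S) : nat := #|pa_Q A|.
Definition npri (S : finType) (A : pa S) : nat := size (undup [seq pa_pri q | q <- enum (pa_Q A)]).

From mathcomp Require Import all_boot zify boolp.
From Stdlib Require List.
Set Implicit Arguments. Unset Strict Implicit. Unset Printing Implicit Defensive.

(* Whether A accepts u.v^omega depends only on which states u reaches from an
   initial state and, for nonempty v, on the relation "some walk from p to q
   reads v and its highest priority is m" (m among the n_A priorities of A):
   cutting a run at the positions |u| + t|v|, the highest priority seen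
   infinitely often is the limsup of the maxima over the blocks.  Both
   profiles are right congruences with at most 2^n, resp. 2^k, joint values
   over all the automata, so by pigeonhole on prefixes u and v shrink below
   2^n, resp. 1 + 2^k, letters without changing them. *)

Definition is_limsup (f : nat -> nat) (p : nat) : Prop :=
  inf_often f p /\ exists N, forall i, N <= i -> f i <= p.

Lemma is_limsupP (f : nat -> nat) (B p : nat) : (forall i, f i <= B) ->
  is_limsup f p <-> inf_often f p /\ (forall q, inf_often f q -> q <= p).
Proof.
move=> f_leB; split=> [[fp [N leN]] | [fp maxp]].
  by split=> // q /(_ N) [i [Ni <-]]; apply: leN.
split=> //.
have above d : exists N, forall i, N <= i -> f i <= p \/ p + d < f i.
  elim: d => [|d [N HN]]; first by exists 0 => i _; lia.
  have /existsNP [N' /forallNP neq] : ~ inf_often f (p + d.+1).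
    by move/maxp; rewrite leqNgt addnS ltnS leq_addr.
  exists (maxn N N') => i; rewrite geq_max => /andP[Ni N'i].
  have := neq i; have := HN i Ni; lia.
have [N HN] := above B; exists N => i Ni.
by have := HN i Ni; have := f_leB i; lia.
Qed.

Lemma block_split (s0 L i : nat) : 0 < L -> s0 <= i ->
  exists t (k : 'I_L), i = s0 + t * L + k.
Proof.
move=> L_gt0 s0_le_i; exists ((i - s0) %/ L), (Ordinal (ltn_pmod (i - s0) L_gt0)).
by rewrite /= -addnA -divn_eq subnKC.
Qed.

Lemma is_limsup_blocks (f : nat -> nat) (p s0 L : nat) : 0 < L ->
  is_limsup f p <-> is_limsup (fun t => \max_(k < L) f (s0 + t * L + k.+1)) p.
Proof.
move=> L_gt0; set M := fun t => _.
have leM t (k : 'I_L) : f (s0 + t * L + k.+1) <= M t.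
  exact: leq_bigmax (fun k : 'I_L => f (s0 + t * L + k.+1)) k.
have split_after i : s0 < i -> exists t (k : 'I_L), i = s0 + t * L + k.+1.
  by case: i => // i /(block_split L_gt0) [t [k ->]]; exists t, k; rewrite addnS.
split=> [[fp [N leN]] | [Mp [T leT]]]; split.
- move=> T; have [i [Ti fi]] := fp (s0 + (T + N) * L).+1.
  have [t [k Ei]] := split_after i (leq_ltn_trans (leq_addr _ _) Ti).
  have TNt : T + N <= t by have := ltn_ord k; nia.
  exists t; split; first by lia.
  apply/eqP; rewrite eqn_leq -{2}fi Ei leM andbT.
  by apply/bigmax_leqP => j _; apply: leN; nia.
- by exists N => t Nt; apply/bigmax_leqP => j _; apply: leN; nia.
- move=> N; have [t [Nt Mt]] := Mp N.
  have [|k Ek] := @eq_bigmax _ (fun k : 'I_L => f (s0 + t * L + k.+1)).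
    by rewrite card_ord.
  by exists (s0 + t * L + k.+1); split; [nia | rewrite -Ek].
- exists (s0 + T * L).+1 => i Ti.
  have [t [k Ei]] := split_after i (leq_ltn_trans (leq_addr _ _) Ti).
  rewrite Ei in Ti *; apply: leq_trans (leM t k) (leT t _).
  by have := ltn_ord k; nia.
Qed.

Lemma pumping (T : Type) (C : finType) (code : seq T -> C) (lo : nat) :
  (forall x y z, lo <= size x -> lo <= size y -> code x = code y ->
     code (x ++ z) = code (y ++ z)) ->
  forall x, lo <= size x -> exists2 x', code x' = code x & lo <= size x' < lo + #|C|.
Proof.
move=> code_catr x; have [n] := ubnP (size x); elim: n x => // n IH x /ltnSE le_xn lo_x.
have [small | big] := ltnP (size x) (lo + #|C|); first by exists x; rewrite ?lo_x.
pose f (i : 'I_#|C|.+1) := code (take (lo + i) x).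
have /injectivePn [i [j neq_ij fij]] : ~~ injectiveb f.
  by apply/injectiveP => /leq_card; rewrite card_ord ltnn.
wlog lt_ij : i j neq_ij fij / i < j.
  move=> sym; case: (ltngtP i j) => [|lt_ji|/val_inj eq_ij]; first exact: sym.
    by apply: (sym j i) => //; rewrite eq_sym.
  by rewrite eq_ij eqxx in neq_ij.
have le_jx : lo + j <= size x by apply: leq_trans big; rewrite leq_add2l -ltnS.
have le_ix : lo + i <= size x by apply: leq_trans le_jx; rewrite leq_add2l ltnW.
pose x' := take (lo + i) x ++ drop (lo + j) x.
have size_x' : size x' = size x - (j - i) by rewrite size_cat size_takel // size_drop; lia.
have code_x' : code x' = code x.
  by rewrite -(cat_take_drop (lo + j) x); apply: code_catr; rewrite ?size_takel ?leq_addr.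
have lt_x'n : size x' < n by rewrite size_x'; lia.
have lo_x' : lo <= size x' by rewrite size_x'; lia.
have [x'' code_x'' x''_bounds] := IH x' lt_x'n lo_x'.
by exists x''; rewrite // code_x'' code_x'.
Qed.

Lemma size_flatten_map (I T : Type) (f : I -> seq T) (L : seq I) :
  size (flatten (map f L)) = \sum_(i <- L) size (f i).
Proof. by rewrite size_flatten sumnE /shape -map_comp big_map. Qed.

Lemma eq_flatten_map (I : Type) (T : eqType) (f g : I -> seq T) (L : seq I) :
  (forall i, size (f i) = size (g i)) ->
  flatten (map f L) = flatten (map g L) <-> forall i, List.In i L -> f i = g i.
Proof.
move=> size_fg; elim: L => [|j L IH] //=.
split=> [/eqP | fL].
  by rewrite eqseq_cat // => /andP[/eqP fj /eqP /IH fL] i [<- | /fL].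
rewrite fL; last by left.
by congr (_ ++ _); apply/IH => i iL; apply: fL; right.
Qed.

Lemma pumping_profiles (I T : Type) (prof : I -> seq T -> seq bool) (K : I -> nat)
    (L : seq I) (lo : nat) :
  (forall i x, size (prof i x) = K i) ->
  (forall i x y z, lo <= size x -> lo <= size y -> prof i x = prof i y ->
     prof i (x ++ z) = prof i (y ++ z)) ->
  forall x, lo <= size x -> exists2 x', (forall i, List.In i L -> prof i x' = prof i x) &
    lo <= size x' < lo + 2 ^ (\sum_(i <- L) K i).
Proof.
move=> size_prof prof_catr x lo_x.
have size_code y : size (flatten [seq prof i y | i <- L]) == \sum_(i <- L) K i.
  by rewrite size_flatten_map; under eq_bigr do rewrite size_prof.
pose code y : (\sum_(i <- L) K i).-tuple bool := Tuple (size_code y).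
have codeE y y' : code y = code y' <-> forall i, List.In i L -> prof i y = prof i y'.
  rewrite -eq_flatten_map => [|i]; last by rewrite !size_prof.
  by split=> [/(congr1 val) | eq_flat]; last exact: val_inj.
have code_catr y y' z : lo <= size y -> lo <= size y' -> code y = code y' ->
    code (y ++ z) = code (y' ++ z).
  by move=> lo_y lo_y' /codeE eq_prof; apply/codeE => i /eq_prof; apply: prof_catr.
have [x' /codeE code_x' bounds] := pumping code_catr lo_x.
by exists x'; rewrite // card_tuple card_bool in bounds.
Qed.

Section Walks.
Variables (S : finType) (x0 : S) (A : pa S).
Local Notation Q := (pa_Q A).

Definition follows (r : nat -> Q) (x : seq S) : Prop :=
  forall k, k < size x -> r k.+1 \in pa_delta (r k) (nth x0 x k).

Definition walk (p : Q) (x : seq S) (q : Q) (m : nat) : Prop :=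
  exists r, [/\ r 0 = p, r (size x) = q, follows r x & m = \max_(k < size x) pa_pri (r k.+1)].

Definition reachable (x : seq S) (q : Q) : Prop :=
  exists2 p, p \in pa_I A & exists m, walk p x q m.

Lemma walk_cat p x z q m : walk p (x ++ z) q m <->
  exists r m1 m2, [/\ walk p x r m1, walk r z q m2 & m = maxn m1 m2].
Proof.
have nth_catl k : k < size x -> nth x0 (x ++ z) k = nth x0 x k.
  by move=> lt_kx; rewrite nth_cat lt_kx.
have nth_catr k : nth x0 (x ++ z) (size x + k) = nth x0 z k.
  by rewrite nth_cat ltnNge leq_addr addKn.
split=> [[r [r0 rxz fol ->]] |
         [mid [m1 [m2 [[r1 [r10 r1x fol1 ->]] [r2 [r20 r2z fol2 ->]] ->]]]]].
  exists (r (size x)), (\max_(k < size x) pa_pri (r k.+1)),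
    (\max_(k < size z) pa_pri (r (size x + k.+1))).
  split.
  - exists r; split=> // k lt_kx; rewrite -nth_catl //; apply: fol.
    by rewrite size_cat ltn_addr.
  - exists (fun k => r (size x + k)); split; rewrite ?addn0 -?size_cat // => k lt_kz.
    by rewrite addnS -nth_catr; apply: fol; rewrite size_cat ltn_add2l.
  - by rewrite size_cat big_split_ord; congr maxn; apply: eq_bigr => k _; rewrite /= addnS.
pose r k := if k < size x then r1 k else r2 (k - size x).
have rl k : k <= size x -> r k = r1 k.
  by rewrite /r leq_eqVlt => /orP[/eqP -> | ->]; rewrite ?ltnn ?subnn ?r20 ?r1x.
have rr k : r (size x + k) = r2 k by rewrite /r ltnNge leq_addr addKn.
exists r; split; first by rewrite rl.
- by rewrite size_cat rr.
- move=> k; rewrite size_cat => lt_k.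
  have [lt_kx | le_xk] := ltnP k (size x).
    by rewrite !rl ?(ltnW lt_kx) // nth_catl //; apply: fol1.
  rewrite -(subnKC le_xk) -addnS !rr nth_catr; apply: fol2; lia.
- rewrite size_cat big_split_ord /=; congr maxn; apply: eq_bigr => k _.
    by rewrite rl.
  by rewrite -addnS rr.
Qed.

Lemma reachable_cat x z q :
  reachable (x ++ z) q <-> exists2 r, reachable x r & exists m, walk r z q m.
Proof.
split=> [[p Ip [m /walk_cat [r [m1 [m2 [pr rq _]]]]]] | [r [p Ip [m1 pr]] [m2 rq]]].
  by exists r; [exists p => //; exists m1 | exists m2].
by exists p => //; exists (maxn m1 m2); apply/walk_cat; exists r, m1, m2.
Qed.

Definition priorities : seq nat := undup [seq pa_pri q | q <- enum Q].

Lemma walk_priority p x q m : 0 < size x -> walk p x q m -> m \in priorities.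
Proof.
move=> x_gt0 [r [_ _ _ ->]].
have [|k ->] := @eq_bigmax _ (fun k : 'I_(size x) => pa_pri (r k.+1)).
  by rewrite card_ord.
by rewrite mem_undup map_f ?mem_enum.
Qed.

Definition reach_profile (x : seq S) : seq bool :=
  [seq `[< reachable x q >] | q <- enum Q].

(* Only maxima in [priorities] are recorded: nonempty words produce no others
   (walk_priority), and this keeps the profile at |Q|^2 n_A bits. *)
Definition walk_profile (x : seq S) : seq bool :=
  [seq `[< walk pq.1 x pq.2 m >] | pq <- enum {: Q * Q}, m <- priorities].

Lemma size_reach_profile x : size (reach_profile x) = nstates A.
Proof. by rewrite size_map -cardE. Qed.

Lemma size_walk_profile x : size (walk_profile x) = nstates A ^ 2 * npri A.
Proof. by rewrite size_allpairs -cardE card_prod mulnn. Qed.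

Lemma reach_profileP x y :
  reach_profile x = reach_profile y <-> forall q, reachable x q <-> reachable y q.
Proof.
rewrite -eq_in_map; split=> [E q | E q _]; last exact: asbool_equiv_eq.
by apply: asbool_eq_equiv; apply: E; rewrite mem_enum.
Qed.

Lemma walk_profileP x y : 0 < size x -> 0 < size y ->
  walk_profile x = walk_profile y <-> forall p q m, walk p x q m <-> walk p y q m.
Proof.
move=> x_gt0 y_gt0; rewrite -eq_in_allpairs.
split=> [E p q m | E pq m _ _]; last exact: asbool_equiv_eq.
have [m_pri | m_pri] := boolP (m \in priorities).
  by apply: asbool_eq_equiv; apply: (E (p, q)); rewrite ?mem_enum.
by split=> w; [move: (walk_priority x_gt0 w) | move: (walk_priority y_gt0 w)];
  rewrite (negPf m_pri).
Qed.

Lemma reach_profile_catr x y z :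
  reach_profile x = reach_profile y -> reach_profile (x ++ z) = reach_profile (y ++ z).
Proof.
rewrite !reach_profileP => E q; rewrite !reachable_cat.
by split=> [[r /E xr rq] | [r /E yr rq]]; exists r.
Qed.

Lemma walk_profile_catr x y z : 0 < size x -> 0 < size y ->
  walk_profile x = walk_profile y -> walk_profile (x ++ z) = walk_profile (y ++ z).
Proof.
move=> x_gt0 y_gt0; rewrite !walk_profileP ?size_cat ?ltn_addr // => E p q m.
by rewrite !walk_cat; split=> [[r [m1 [m2 [/E pr rq ->]]]] | [r [m1 [m2 [/E pr rq ->]]]]];
  exists r, m1, m2.
Qed.

Lemma acceptsE w : accepts A w <->
  exists2 rho : nat -> Q, is_run w rho &
    exists2 p, is_limsup (fun i => pa_pri (rho i)) p & ~~ odd p.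
Proof.
have bounded (rho : nat -> Q) i : pa_pri (rho i) <= \max_(q : Q) pa_pri q.
  exact: leq_bigmax.
split=> [[rho [run [p [fp [maxp odd_p]]]]] |
         [rho run [p /(is_limsupP _ (bounded rho)) [fp maxp] odd_p]]].
  by exists rho => //; exists p => //; apply/(is_limsupP _ (bounded rho)).
by exists rho; split=> //; exists p.
Qed.

Lemma upw_prefix u v i : i < size u -> upw x0 u v i = nth x0 u i.
Proof. by rewrite /upw => ->. Qed.

Lemma upw_block u v t k : k < size v -> upw x0 u v (size u + t * size v + k) = nth x0 v k.
Proof. by move=> lt_kv; rewrite /upw -addnA ltnNge leq_addr addKn modnMDl modn_small. Qed.

Definition block_accepts (u v : seq S) : Prop :=
  exists2 a : nat -> Q, reachable u (a 0) &
    exists M, (forall t, walk (a t) v (a t.+1) (M t)) /\ exists2 p, is_limsup M p & ~~ odd p.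

Lemma accepts_upw_blocks u v : 0 < size v -> accepts A (upw x0 u v) -> block_accepts u v.
Proof.
move=> v_gt0 /acceptsE [rho [rho0 step] [p lsp odd_p]].
exists (fun t => rho (size u + t * size v)).
  exists (rho 0) => //; exists (\max_(k < size u) pa_pri (rho k.+1)), rho.
  split; rewrite ?mul0n ?addn0 // => k lt_ku.
  by rewrite -(upw_prefix v lt_ku); apply: step.
exists (fun t => \max_(k < size v) pa_pri (rho (size u + t * size v + k.+1))); split.
  move=> t; exists (fun k => rho (size u + t * size v + k)).
  split; rewrite ?addn0 ?mulSnr ?addnA // => k lt_kv.
  by rewrite addnS -(upw_block u t lt_kv); apply: step.
by exists p => //; exact: (is_limsup_blocks (fun i => pa_pri (rho i)) p (size u) v_gt0).1.
Qed.

Lemma block_accepts_upw u v : 0 < size v -> block_accepts u v -> accepts A (upw x0 u v).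
Proof.
move=> v_gt0 [a [i0 Ii0 [_ [ru [ru0 ru_end ru_fol _]]]]] [M [walkM [p lsM odd_p]]].
have [R RP] := choice walkM.
set s0 := size u in ru_end ru_fol *; set L := size v in RP v_gt0 *.
pose rho i := if i < s0 then ru i else R ((i - s0) %/ L) ((i - s0) %% L).
have rho_inner t (k : 'I_L) : rho (s0 + t * L + k) = R t k.
  rewrite /rho -addnA ltnNge leq_addr addKn divnMDl // modnMDl.
  by rewrite divn_small // modn_small // addn0.
have rho_block t k : k <= L -> rho (s0 + t * L + k) = R t k.
  rewrite leq_eqVlt => /orP[/eqP -> | lt_kL]; last exact: (rho_inner t (Ordinal lt_kL)).
  have [_ -> _ _] := RP t; have [<- _ _ _] := RP t.+1.
  by rewrite -addnA -mulSnr -[s0 + _]addn0; exact: (rho_inner t.+1 (Ordinal v_gt0)).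
have rho_prefix k : k <= s0 -> rho k = ru k.
  rewrite leq_eqVlt => /orP[/eqP -> | lt_ks]; last by rewrite /rho lt_ks.
  rewrite ru_end; have [<- _ _ _] := RP 0.
  by rewrite -(rho_block 0 0) ?mul0n ?addn0.
apply/acceptsE; exists rho.
  split=> [|i]; first by rewrite rho_prefix ?ru0.
  have [lt_is | le_si] := ltnP i s0.
    by rewrite !rho_prefix ?(ltnW lt_is) // upw_prefix //; apply: ru_fol.
  have [t [k ->]] := block_split v_gt0 le_si.
  rewrite -addnS !rho_block ?(ltnW (ltn_ord k)) // upw_block //.
  by have [_ _ fol _] := RP t; apply: fol.
exists p => //; apply/(is_limsup_blocks _ p s0 v_gt0).
suff -> : (fun t => \max_(k < L) pa_pri (rho (s0 + t * L + k.+1))) = M by [].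
apply: funext => t; have [_ _ _ ->] := RP t.
by apply: eq_bigr => k _; rewrite rho_block.
Qed.

Lemma accepts_upw_profile u v u' v' : 0 < size v -> 0 < size v' ->
  reach_profile u = reach_profile u' -> walk_profile v = walk_profile v' ->
  accepts A (upw x0 u v) <-> accepts A (upw x0 u' v').
Proof.
move=> v_gt0 v'_gt0 /reach_profileP Eu /(walk_profileP v_gt0 v'_gt0) Ev.
split=> /accepts_upw_blocks-/(_ _)[//| a /Eu ua [M [aM lsM]]];
  apply: block_accepts_upw => //; exists a => //; exists M; split=> // t; apply/Ev; exact: aM.
Qed.

End Walks.

Theorem corollary7 (S : finType) (x0 : S) (P N : seq (pa S)) (u v : seq S) :
  0 < size v ->
  (forall A, List.In A P -> accepts A (upw x0 u v)) ->
  (forall A, List.In A N -> ~ accepts A (upw x0 u v)) ->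
  exists u' v' : seq S,
    0 < size v' /\
    (forall A, List.In A P -> accepts A (upw x0 u' v')) /\
    (forall A, List.In A N -> ~ accepts A (upw x0 u' v')) /\
    size u' + size v' <=
      2 ^ (\sum_(A <- P ++ N) nstates A) - 1
      + 2 ^ (\sum_(A <- P ++ N) nstates A ^ 2 * npri A).
Proof.
move=> v_gt0 accP rejN.
have [u' Eu /andP[_ small_u']] := pumping_profiles (P ++ N) (size_reach_profile x0)
  (fun A x y z _ _ => @reach_profile_catr S x0 A x y z) (leq0n (size u)).
have [v' Ev /andP[v'_gt0 small_v']] := pumping_profiles (P ++ N) (size_walk_profile x0)
  (@walk_profile_catr S x0) v_gt0.
have accE A : List.In A (P ++ N) -> accepts A (upw x0 u v) <-> accepts A (upw x0 u' v').
  by move=> PN_A; apply: accepts_upw_profile; rewrite ?Eu ?Ev.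
exists u', v'; split=> //; split; [|split].
- by move=> A P_A; apply/accE; [apply: List.in_or_app; left | exact: accP].
- move=> A N_A acc'; apply: (rejN A N_A); apply/accE => //.
  by apply: List.in_or_app; right.
- by move: small_u' small_v'; rewrite add0n add1n; lia.
Qed.
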